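(* For every $\theta>0$ there exists $C>0$ such that for all $n\in\mathbb{Z}^2$, all $\mu\in\mathbb{Z}$ and all dyadic $N_1,N_2,N_3\ge1$, $$\big|\Gamma^-_\mu(n)\cap\{|n_1|\sim N_1,\ |n_3|\sim N_3\}\big|\le C N_1N_3\max(N_1,N_3)^\theta,$$ $$\big|\Gamma^-_\mu(n)\cap\{|n_1|\sim N_1,\ |n_2|\sim N_2\}\big|\le C N_1N_2\max(N_1,N_2)^\theta.$$
   Context: For $n=(j,k)\in\mathbb{Z}^2$ let $|n|_-^2=j^2-k^2$ (hyperbolic modulus). For $n\in\mathbb{Z}^2$, $\Gamma(n)=\{(n_1,n_2,n_3)\in(\mathbb{Z}^2)^3: n_1-n_2+n_3=n,\ n\ne n_1,\ n\ne n_3\}$, and for $\mu\in\mathbb{Z}$, $\Gamma^-_\mu(n)=\{(n_1,n_2,n_3)\in\Gamma(n): |n|_-^2-|n_1|_-^2+|n_2|_-^2-|n_3|_-^2=\mu\}$. For dyadic $N\ge1$, $|m|\sim N$ means $\frac12N\le|m|<2N$ if $N\ge2$, and $|m|<2$ if $N=1$ ($|\cdot|$ the Euclidean norm). *)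

From Stdlib Require Import ZArith Reals List.
Open Scope Z_scope.

Definition Z2 := (Z * Z)%type.
Definition triple := (Z2 * Z2 * Z2)%type.

Definition add2 (a b : Z2) : Z2 := (fst a + fst b, snd a + snd b).
Definition sub2 (a b : Z2) : Z2 := (fst a - fst b, snd a - snd b).

Definition hypmod2 (m : Z2) : Z := fst m * fst m - snd m * snd m.
Definition eucl2 (m : Z2) : Z := fst m * fst m + snd m * snd m.

Definition Gamma (n : Z2) (t : triple) : Prop :=
  let '(n1, n2, n3) := t in
  add2 (sub2 n1 n2) n3 = n /\ n <> n1 /\ n <> n3.

Definition Gamma_minus (mu : Z) (n : Z2) (t : triple) : Prop :=
  Gamma n t /\
  (let '(n1, n2, n3) := t in
   hypmod2 n - hypmod2 n1 + hypmod2 n2 - hypmod2 n3 = mu).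

(* |m| ~ N for dyadic N >= 1 : N/2 <= |m| < 2N if N >= 2, |m| < 2 if N = 1
   (stated with squared norms, which is equivalent since both sides are >= 0) *)
Definition dsim (m : Z2) (N : Z) : Prop :=
  if N =? 1 then eucl2 m < 4
  else N * N <= 4 * eucl2 m /\ eucl2 m < 4 * (N * N).

(* |S| <= b : every duplicate-free finite list of elements of S has length <= b
   (in particular S is finite). *)
Definition card_le {T : Type} (S : T -> Prop) (b : R) : Prop :=
  forall l : list T, NoDup l -> (forall x, In x l -> S x) -> (INR (length l) <= b)%R.

Definition t1 (t : triple) : Z2 := fst (fst t).
Definition t2 (t : triple) : Z2 := snd (fst t).
Definition t3 (t : triple) : Z2 := snd t.

From Stdlib Require Import ZArith Reals List Lia Lra Classical ClassicalEpsilon.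
Open Scope Z_scope.

(* With x = n1 - n and z = n3 - n the relation defining Gamma^-_mu(n) reads
   mu = 2 det(x, z'), z' = (z_k, z_j); for the pair (n1, n2) with |n2| << |n1| the change of
   variables j + k, j - k gives a similar determinant equation.  So both estimates count pairs
   (u, v) of lattice points in boxes of sides A, B with det(u, v) = m.  For fixed u != 0 the
   solutions v form a progression whose step is the primitive vector w of u, so there are
   O(1 + B / |w|) of them, and a box of side A holds O(1 + A / |w|) vectors u with primitive
   part w.  Sorting u by the dyadic sizes of the coordinates of w, each of the O(log^2)
   classes contributes O(AB) pairs, and the logarithmic loss is absorbed by max(N)^theta. *)

(** * Counting with integer bounds *)

Definition card_leZ {T : Type} (S : T -> Prop) (b : Z) : Prop :=
  forall l : list T, NoDup l -> (forall x, In x l -> S x) -> Z.of_nat (length l) <= b.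

Lemma card_leZ_mono {T} (S S' : T -> Prop) b b' :
  (forall x, S x -> S' x) -> card_leZ S' b -> b <= b' -> card_leZ S b'.
Proof. intros HS H Hb l Hl Hin. specialize (H l Hl (fun x h => HS x (Hin x h))). lia. Qed.

Lemma card_leZ_nonneg {T} (S : T -> Prop) b : card_leZ S b -> 0 <= b.
Proof. intro H. apply (H nil (NoDup_nil _)). intros x []. Qed.

Lemma card_leZ_witness {T} (S : T -> Prop) b a : S a -> card_leZ S b -> 1 <= b.
Proof.
  intros Ha H. apply (H (a :: nil)).
  - repeat constructor. intros [].
  - intros x [<-|[]]. exact Ha.
Qed.

Lemma card_leZ_empty {T} (S : T -> Prop) b : 0 <= b -> (forall x, ~ S x) -> card_leZ S b.
Proof. intros Hb H [|a l] Hl Hin; [exact Hb|]. destruct (H a (Hin a (or_introl eq_refl))). Qed.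

Lemma card_leZ_min {T} (S : T -> Prop) a b :
  card_leZ S a -> card_leZ S b -> card_leZ S (Z.min a b).
Proof. intros Ha Hb l Hl Hin. specialize (Ha l Hl Hin). specialize (Hb l Hl Hin). lia. Qed.

Lemma card_leZ_inj {A B} (S : A -> Prop) (S' : B -> Prop) (f : A -> B) b :
  (forall x y, S x -> S y -> f x = f y -> x = y) -> (forall x, S x -> S' (f x)) ->
  card_leZ S' b -> card_leZ S b.
Proof.
  intros Hf HS H l Hl Hin. rewrite <- (length_map f). apply H.
  - apply NoDup_map_NoDup_ForallPairs; [|exact Hl]. intros x y hx hy. auto.
  - intros y Hy. apply in_map_iff in Hy. destruct Hy as [x [<- Hx]]. auto.
Qed.

Lemma card_leZ_remove {T} (S : T -> Prop) b a :
  card_leZ S b -> S a -> card_leZ (fun x => S x /\ x <> a) (b - 1).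
Proof.
  intros H Ha l Hl Hin. enough (Z.of_nat (length (a :: l)) <= b) by (simpl in *; lia).
  apply H.
  - constructor; [|exact Hl]. intro h. apply Hin in h. tauto.
  - intros x [<-|h]; [exact Ha|]. apply Hin, h.
Qed.

Lemma card_leZ_split {T} (S P : T -> Prop) b1 b2 :
  card_leZ (fun x => S x /\ P x) b1 -> card_leZ (fun x => S x /\ ~ P x) b2 ->
  card_leZ S (b1 + b2).
Proof.
  intros H1 H2 l Hl Hin.
  set (p x := if excluded_middle_informative (P x) then true else false).
  rewrite <- (filter_length p l), Nat2Z.inj_add.
  apply Z.add_le_mono; [apply H1 | apply H2]; try apply (NoDup_filter _ Hl);
    intros x Hx; apply filter_In in Hx; destruct Hx as [Hx Hp]; unfold p in Hp;
    destruct (excluded_middle_informative (P x)); simpl in Hp; try discriminate; auto.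
Qed.

Lemma card_leZ_union {T} (S1 S2 : T -> Prop) b1 b2 :
  card_leZ S1 b1 -> card_leZ S2 b2 -> card_leZ (fun x => S1 x \/ S2 x) (b1 + b2).
Proof.
  intros H1 H2. apply card_leZ_split with (P := S1).
  - eapply card_leZ_mono; [|exact H1|lia]. tauto.
  - eapply card_leZ_mono; [|exact H2|lia]. tauto.
Qed.

Lemma card_leZ_fibers {A B} (S : A -> Prop) (f : A -> B) (m c : Z) : 0 <= c ->
  card_leZ (fun y => exists x, S x /\ f x = y) m ->
  (forall y, card_leZ (fun x => S x /\ f x = y) c) -> card_leZ S (m * c).
Proof.
  intros Hc Hm. pose proof (card_leZ_nonneg _ _ Hm) as Hm0.
  replace m with (Z.of_nat (Z.to_nat m)) in Hm |- * by lia. clear Hm0.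
  revert S Hm. induction (Z.to_nat m) as [|k IH]; intros S Hm Hfib.
  all: destruct (classic (exists a, S a)) as [[a Ha]|Hnone];
    [|apply card_leZ_empty; [nia|]; intros x Hx; apply Hnone; eauto].
  - pose proof (card_leZ_witness _ _ (f a) (ex_intro _ a (conj Ha eq_refl)) Hm). lia.
  - rewrite Nat2Z.inj_succ, Z.mul_succ_l, Z.add_comm.
    apply card_leZ_split with (P := fun x => f x = f a).
    + apply Hfib.
    + apply IH.
      * eapply card_leZ_mono; [|apply (card_leZ_remove _ _ (f a) Hm); eauto|lia].
        intros y [x [[Hx Hxa] <-]]. split; eauto.
      * intro y. eapply card_leZ_mono; [|apply (Hfib y)|lia]. tauto.
Qed.

Definition in_window (c h z : Z) : Prop := c <= z < c + h.

Lemma card_leZ_window (c h : Z) : 0 <= h -> card_leZ (in_window c h) h.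
Proof.
  intros Hh l Hl Hin.
  assert (Hmap : NoDup (map (fun z => Z.to_nat (z - c)) l)).
  { apply NoDup_map_NoDup_ForallPairs; [|exact Hl].
    intros x y hx hy. apply Hin in hx, hy. unfold in_window in *. lia. }
  apply NoDup_incl_length with (l' := seq 0 (Z.to_nat h)) in Hmap.
  - rewrite length_map, length_seq in Hmap. lia.
  - intros i Hi. apply in_map_iff in Hi. destruct Hi as [z [<- Hz]]. apply Hin in Hz.
    apply in_seq. unfold in_window in Hz. lia.
Qed.

Definition in_box (c h d k : Z) (u : Z2) : Prop :=
  in_window c h (fst u) /\ in_window d k (snd u).

Lemma card_leZ_box (c h d k : Z) : 0 <= h -> 0 <= k -> card_leZ (in_box c h d k) (h * k).
Proof.
  intros Hh Hk. apply card_leZ_fibers with (f := @fst Z Z); [exact Hk| |].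
  - eapply card_leZ_mono; [|apply (card_leZ_window c h Hh)|lia].
    intros y [u [[Hu _] <-]]. exact Hu.
  - intro y. apply (card_leZ_inj _ (in_window d k) (@snd Z Z)).
    + intros [x1 x2] [y1 y2] [_ e1] [_ e2] e. simpl in *. congruence.
    + intros u [[_ Hu] _]. exact Hu.
    + apply card_leZ_window, Hk.
Qed.

Lemma card_leZ_pivot {T} (S : T -> Prop) (tau : T -> T -> Z) (q : Z) : 0 <= q ->
  (forall x0 x, S x0 -> S x -> Z.abs (tau x0 x) <= q) ->
  (forall x0 x y, S x0 -> S x -> S y -> tau x0 x = tau x0 y -> x = y) ->
  card_leZ S (2 * q + 1).
Proof.
  intros Hq Hb Hi. destruct (classic (exists x0, S x0)) as [[x0 H0]|Hnone].
  - apply (card_leZ_inj _ (in_window (- q) (2 * q + 1)) (tau x0)).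
    + intros x y hx hy. apply Hi; auto.
    + intros x hx. specialize (Hb x0 x H0 hx). unfold in_window. lia.
    + apply card_leZ_window. lia.
  - apply card_leZ_empty; [lia|]. intros x hx. eauto.
Qed.

(** * Lattice points on lines *)

Definition det (u v : Z2) : Z := fst u * snd v - snd u * fst v.
Definition swap (u : Z2) : Z2 := (snd u, fst u).
Definition gcd2 (u : Z2) : Z := Z.gcd (fst u) (snd u).
Definition prim (u : Z2) : Z2 := (fst u / gcd2 u, snd u / gcd2 u).

Lemma prim_spec (u : Z2) : u <> (0, 0) ->
  0 < gcd2 u /\ fst u = gcd2 u * fst (prim u) /\ snd u = gcd2 u * snd (prim u) /\
  Z.gcd (fst (prim u)) (snd (prim u)) = 1.
Proof.
  destruct u as [u1 u2]. unfold prim, gcd2; cbn [fst snd]. intro Hu.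
  assert (Hg : 0 < Z.gcd u1 u2).
  { destruct (Z.eq_dec (Z.gcd u1 u2) 0) as [H0|H0].
    - apply Z.gcd_eq_0 in H0. destruct H0; subst; contradiction.
    - pose proof (Z.gcd_nonneg u1 u2). lia. }
  split; [exact Hg|]. split; [|split].
  - apply Z.div_exact; [lia|]. apply Z.mod_divide; [lia|apply Z.gcd_divide_l].
  - apply Z.div_exact; [lia|]. apply Z.mod_divide; [lia|apply Z.gcd_divide_r].
  - apply Z.gcd_div_gcd; [lia|reflexivity].
Qed.

Lemma prim_neq0 (u : Z2) : u <> (0, 0) -> prim u <> (0, 0).
Proof.
  intros Hu Hw. destruct (prim_spec u Hu) as [_ [e1 [e2 _]]]. rewrite Hw in e1, e2.
  apply Hu. destruct u; simpl in *; f_equal; lia.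
Qed.

(* The solutions of [det u v = m] form a progression with step [prim u]; the index
   is read off with Bezout coefficients of [prim u]. *)
Lemma det_eq_progression (u : Z2) : u <> (0, 0) -> exists tau : Z2 -> Z2 -> Z,
  forall v0 v, det u v0 = det u v ->
    fst v - fst v0 = tau v0 v * fst (prim u) /\ snd v - snd v0 = tau v0 v * snd (prim u).
Proof.
  intro Hu. destruct (prim_spec u Hu) as [Hg [e1 [e2 Hcop]]].
  destruct (Z.gcd_bezout _ _ _ Hcop) as [a [b Hab]].
  exists (fun v0 v => a * (fst v - fst v0) + b * (snd v - snd v0)). intros v0 v Hdet.
  set (w1 := fst (prim u)) in *. set (w2 := snd (prim u)) in *.
  set (d1 := fst v - fst v0). set (d2 := snd v - snd v0).
  assert (Hpar : w1 * d2 = w2 * d1).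
  { unfold det in Hdet. rewrite e1, e2 in Hdet. unfold d1, d2.
    apply (Z.mul_cancel_l _ _ (gcd2 u)); lia. }
  cbv beta; fold d1 d2. split.
  - transitivity (d1 * (a * w1 + b * w2)); [rewrite Hab; ring|].
    transitivity (a * w1 * d1 + b * (w2 * d1)); [ring|]. rewrite <- Hpar. ring.
  - transitivity (d2 * (a * w1 + b * w2)); [rewrite Hab; ring|].
    transitivity (a * (w1 * d2) + b * w2 * d2); [ring|]. rewrite Hpar. ring.
Qed.

Definition window_points (h X : Z) : Z := 2 * ((h - 1) / X) + 1.

Lemma card_leZ_progression (S : Z2 -> Prop) (w : Z2) (tau : Z2 -> Z2 -> Z) (h X : Z) :
  1 <= h -> 1 <= X ->
  (forall x0 x, S x0 -> S x ->
     fst x - fst x0 = tau x0 x * fst w /\ snd x - snd x0 = tau x0 x * snd w) ->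
  (X <= Z.abs (fst w) /\ forall x0 x, S x0 -> S x -> Z.abs (fst x - fst x0) < h) \/
  (X <= Z.abs (snd w) /\ forall x0 x, S x0 -> S x -> Z.abs (snd x - snd x0) < h) ->
  card_leZ S (window_points h X).
Proof.
  intros Hh HX Hp Hc. apply card_leZ_pivot with (tau := tau).
  - apply Z.div_pos; lia.
  - intros x0 x H0 H. apply Z.div_le_lower_bound; [lia|].
    destruct (Hp x0 x H0 H) as [e1 e2].
    destruct Hc as [[Hw Hs]|[Hw Hs]]; specialize (Hs x0 x H0 H);
      [rewrite e1 in Hs | rewrite e2 in Hs]; rewrite Z.abs_mul in Hs; nia.
  - intros x0 x y H0 Hx Hy E. destruct (Hp x0 x H0 Hx), (Hp x0 y H0 Hy).
    rewrite E in *. destruct x, y; simpl in *; f_equal; lia.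
Qed.

Lemma card_det_fiber (u : Z2) (m c h d k X H : Z) :
  u <> (0, 0) -> 1 <= h -> 1 <= k -> 1 <= X ->
  (X <= Z.abs (fst (prim u)) /\ H = h) \/ (X <= Z.abs (snd (prim u)) /\ H = k) ->
  card_leZ (fun v => in_box c h d k v /\ det u v = m) (window_points H X).
Proof.
  intros Hu Hh Hk HX HH. destruct (det_eq_progression u Hu) as [tau Htau].
  destruct HH as [[Hw ->]|[Hw ->]];
    apply card_leZ_progression with (w := prim u) (tau := tau); auto;
    try (intros v0 v [_ e0] [_ e]; apply Htau; congruence);
    [left|right]; split; auto; unfold in_box, in_window;
    intros v0 v [[] _] [[] _]; lia.
Qed.

Lemma card_prim_fiber (w : Z2) (c h d k X H : Z) : 1 <= h -> 1 <= k -> 1 <= X ->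
  (X <= Z.abs (fst w) /\ H = h) \/ (X <= Z.abs (snd w) /\ H = k) ->
  card_leZ (fun u => (in_box c h d k u /\ u <> (0, 0)) /\ prim u = w) (window_points H X).
Proof.
  intros Hh Hk HX HH.
  assert (Hp : forall u0 u, (in_box c h d k u0 /\ u0 <> (0, 0)) /\ prim u0 = w ->
      (in_box c h d k u /\ u <> (0, 0)) /\ prim u = w ->
      fst u - fst u0 = (gcd2 u - gcd2 u0) * fst w /\
      snd u - snd u0 = (gcd2 u - gcd2 u0) * snd w).
  { intros u0 u [[_ H0] <-] [[_ H1] Hw].
    destruct (prim_spec u0 H0) as [_ [f1 [f2 _]]].
    destruct (prim_spec u H1) as [_ [g1 [g2 _]]]. rewrite Hw in g1, g2. lia. }
  destruct HH as [[Hw ->]|[Hw ->]];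
    apply card_leZ_progression with (w := w) (tau := fun u0 u => gcd2 u - gcd2 u0); auto;
    [left|right]; split; auto; unfold in_box, in_window;
    intros v0 v [[[] _] _] [[[] _] _]; lia.
Qed.

Lemma pow2_ge1 (l : Z) : 0 <= l -> 1 <= 2 ^ l.
Proof. intro Hl. pose proof (Z.pow_pos_nonneg 2 l ltac:(lia) Hl). lia. Qed.

Lemma pow2_le (a b : Z) : a <= b -> 2 ^ a <= 2 ^ b.
Proof. intro Hab. apply Z.pow_le_mono_r; lia. Qed.

Definition level (a : Z) : Z := Z.log2_up (a + 1).

Lemma level_spec (a : Z) : 0 <= a ->
  0 <= level a /\ a < 2 ^ level a /\ (level a = 0 -> a = 0) /\
  forall l, 1 <= l <= level a -> 2 ^ (l - 1) <= a.
Proof.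
  intro Ha. unfold level. pose proof (Z.log2_up_nonneg (a + 1)) as H0.
  destruct (Z.eq_dec a 0) as [->|Hne].
  - change (Z.log2_up (0 + 1)) with 0.
    split; [lia|]. split; [reflexivity|]. split; [reflexivity|lia].
  - destruct (Z.log2_up_spec (a + 1) ltac:(lia)) as [Hlo Hhi].
    rewrite <- Z.sub_1_r in Hlo.
    split; [lia|]. split; [lia|]. split.
    + intro Hl. rewrite Hl in Hhi. simpl in Hhi. lia.
    + intros l Hl. pose proof (pow2_le (l - 1) (Z.log2_up (a + 1) - 1) ltac:(lia)). lia.
Qed.

Definition levels (w : Z2) : Z2 := (level (Z.abs (fst w)), level (Z.abs (snd w))).

Lemma levels_nonneg (w : Z2) : 0 <= fst (levels w) /\ 0 <= snd (levels w).
Proof.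
  destruct (level_spec (Z.abs (fst w)) ltac:(lia)) as [H1 _].
  destruct (level_spec (Z.abs (snd w)) ltac:(lia)) as [H2 _]. split; assumption.
Qed.

Lemma levels_neq0 (w : Z2) : w <> (0, 0) -> 1 <= fst (levels w) \/ 1 <= snd (levels w).
Proof.
  intro Hw. destruct (level_spec (Z.abs (fst w)) ltac:(lia)) as [H1 [_ [E1 _]]].
  destruct (level_spec (Z.abs (snd w)) ltac:(lia)) as [H2 [_ [E2 _]]]. simpl.
  destruct (Z.eq_dec (level (Z.abs (fst w))) 0) as [Z1|]; [|lia].
  destruct (Z.eq_dec (level (Z.abs (snd w))) 0) as [Z2|]; [|lia].
  exfalso. apply Hw. specialize (E1 Z1). specialize (E2 Z2). destruct w; simpl in *; f_equal; lia.
Qed.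

(* [G] bounds a progression whose step has a coordinate of level at least [l1] (resp. [l2]),
   counted in a window of length [h] along the first (resp. [k] along the second) axis. *)
Definition level_bound (l1 l2 h k G : Z) : Prop :=
  (1 <= l1 /\ G = window_points h (2 ^ (l1 - 1))) \/
  (1 <= l2 /\ G = window_points k (2 ^ (l2 - 1))).

Lemma window_points_ge1 (h X : Z) : 1 <= h -> 1 <= X -> 1 <= window_points h X.
Proof.
  intros Hh HX. unfold window_points. pose proof (Z.div_pos (h - 1) X ltac:(lia) ltac:(lia)). lia.
Qed.

Lemma window_points_small (h X : Z) : 1 <= h <= X -> window_points h X = 1.
Proof. intro Hh. unfold window_points. rewrite Z.div_small; lia. Qed.

Lemma level_bound_ge1 (l1 l2 h k G : Z) : 1 <= h -> 1 <= k -> level_bound l1 l2 h k G -> 1 <= G.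
Proof.
  intros Hh Hk [[Hl ->]|[Hl ->]]; apply window_points_ge1; auto; apply pow2_ge1; lia.
Qed.

Lemma level_bound_step (w : Z2) (l1 l2 h k G : Z) :
  l1 <= fst (levels w) -> l2 <= snd (levels w) -> level_bound l1 l2 h k G ->
  exists X H, 1 <= X /\ G = window_points H X /\
    ((X <= Z.abs (fst w) /\ H = h) \/ (X <= Z.abs (snd w) /\ H = k)).
Proof.
  unfold levels; cbn [fst snd]. intros H1 H2 [[Hl ->]|[Hl ->]].
  - exists (2 ^ (l1 - 1)), h. split; [apply pow2_ge1; lia|]. split; [reflexivity|].
    left. split; [|reflexivity]. apply (level_spec (Z.abs (fst w))); lia.
  - exists (2 ^ (l2 - 1)), k. split; [apply pow2_ge1; lia|]. split; [reflexivity|].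
    right. split; [|reflexivity]. apply (level_spec (Z.abs (snd w))); lia.
Qed.

Definition levels_card (l1 l2 : Z) : Z := (2 * 2 ^ l1 - 1) * (2 * 2 ^ l2 - 1).

Lemma card_levels (l1 l2 : Z) : 0 <= l1 -> 0 <= l2 ->
  card_leZ (fun w => levels w = (l1, l2)) (levels_card l1 l2).
Proof.
  intros H1 H2. pose proof (pow2_ge1 l1 H1). pose proof (pow2_ge1 l2 H2).
  eapply card_leZ_mono;
    [|apply (card_leZ_box (1 - 2 ^ l1) (2 * 2 ^ l1 - 1) (1 - 2 ^ l2) (2 * 2 ^ l2 - 1)); lia
     |reflexivity].
  intros w Hw. unfold levels in Hw. injection Hw as E1 E2.
  destruct (level_spec (Z.abs (fst w)) ltac:(lia)) as [_ [B1 _]].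
  destruct (level_spec (Z.abs (snd w)) ltac:(lia)) as [_ [B2 _]].
  rewrite E1 in B1. rewrite E2 in B2. unfold in_box, in_window. lia.
Qed.

(** * Pairs with prescribed determinant *)

Section DetPairs.

Variables (c1 h1 d1 k1 c2 h2 d2 k2 m : Z).
Hypotheses (Hh1 : 1 <= h1) (Hk1 : 1 <= k1) (Hh2 : 1 <= h2) (Hk2 : 1 <= k2).

Definition det_pairs (p : Z2 * Z2) : Prop :=
  (in_box c1 h1 d1 k1 (fst p) /\ fst p <> (0, 0)) /\
  in_box c2 h2 d2 k2 (snd p) /\ det (fst p) (snd p) = m.

Lemma card_det_pairs_by_first (P : Z2 * Z2 -> Prop) (U : Z2 -> Prop) (a b : Z) : 0 <= b ->
  (forall p, P p -> det_pairs p /\ U (fst p)) -> card_leZ U a ->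
  (forall u, U u -> u <> (0, 0) -> card_leZ (fun v => in_box c2 h2 d2 k2 v /\ det u v = m) b) ->
  card_leZ P (a * b).
Proof.
  intros Hb HP Ha Hfib. apply card_leZ_fibers with (f := @fst Z2 Z2); [exact Hb| |].
  - eapply card_leZ_mono; [|exact Ha|lia]. intros u [p [Hp <-]]. apply HP, Hp.
  - intro u. destruct (classic (U u /\ u <> (0, 0))) as [[Hu Hu0]|Hnot].
    + apply (card_leZ_inj _ (fun v => in_box c2 h2 d2 k2 v /\ det u v = m) (@snd Z2 Z2));
        [| |apply Hfib; assumption].
      * intros [x1 x2] [y1 y2] [_ e1] [_ e2] e. simpl in *. congruence.
      * intros p [Hp <-]. apply HP, Hp.
    + apply card_leZ_empty; [exact Hb|]. intros p [Hp <-]. apply Hnot.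
      destruct (HP p Hp) as [[[_ Hu0] _] Hu]. auto.
Qed.

Lemma card_level_class (l1 l2 G F : Z) : 0 <= l1 -> 0 <= l2 ->
  level_bound l1 l2 h1 k1 G -> level_bound l1 l2 h2 k2 F ->
  card_leZ (fun p => det_pairs p /\ levels (prim (fst p)) = (l1, l2))
    (Z.min (h1 * k1) (levels_card l1 l2 * G) * F).
Proof.
  intros Hl1 Hl2 HG HF.
  set (U u := (in_box c1 h1 d1 k1 u /\ u <> (0, 0)) /\ levels (prim u) = (l1, l2)).
  apply card_det_pairs_by_first with (U := U).
  - pose proof (level_bound_ge1 _ _ _ _ _ Hh2 Hk2 HF). lia.
  - intros p [[Hp Hv] Hl]. split; [split; assumption|]. split; assumption.
  - apply card_leZ_min.
    + eapply card_leZ_mono; [|apply (card_leZ_box c1 h1 d1 k1); lia|lia].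
      intros u [[Hu _] _]. exact Hu.
    + apply card_leZ_fibers with (f := prim).
      * pose proof (level_bound_ge1 _ _ _ _ _ Hh1 Hk1 HG). lia.
      * eapply card_leZ_mono; [|apply (card_levels l1 l2); assumption|lia].
        intros w [u [[_ Hu] <-]]. exact Hu.
      * intro w. destruct (classic (exists u, U u /\ prim u = w)) as [[u0 [[_ Hw] <-]]|Hnone].
        -- destruct (level_bound_step (prim u0) l1 l2 h1 k1 G) as [X [H [HX [-> HH]]]];
             try (rewrite Hw; simpl; lia); [exact HG|].
           eapply card_leZ_mono;
             [|apply (card_prim_fiber (prim u0) c1 h1 d1 k1 X H); assumption|lia].
           intros u [[Hu _] Hp]. split; assumption.
        -- apply card_leZ_empty; [pose proof (level_bound_ge1 _ _ _ _ _ Hh1 Hk1 HG); lia|].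
           intros u Hu. apply Hnone. eauto.
  - intros u [_ Hl] Hu0.
    destruct (level_bound_step (prim u) l1 l2 h2 k2 F) as [X [H [HX [-> HH]]]];
      try (rewrite Hl; simpl; lia); [exact HF|].
    apply card_det_fiber; assumption.
Qed.

(* Beyond the caps the step of the progression [det u v = m] is at least the width of the
   second box, so each [u] has at most one partner [v]. *)
Lemma card_top_levels (K1 K2 : Z) : 1 <= K1 -> 1 <= K2 ->
  h2 <= 2 ^ (K1 - 1) -> k2 <= 2 ^ (K2 - 1) ->
  card_leZ (fun p => det_pairs p /\
      (K1 <= fst (levels (prim (fst p))) \/ K2 <= snd (levels (prim (fst p))))) (h1 * k1).
Proof.
  intros HK1 HK2 HKh HKk. rewrite <- (Z.mul_1_r (h1 * k1)).
  set (U u := in_box c1 h1 d1 k1 u /\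
      (K1 <= fst (levels (prim u)) \/ K2 <= snd (levels (prim u)))).
  apply card_det_pairs_by_first with (U := U); [lia| | |].
  - intros p [[[Hp Hu0] Hv] Hl]. exact (conj (conj (conj Hp Hu0) Hv) (conj Hp Hl)).
  - eapply card_leZ_mono; [|apply (card_leZ_box c1 h1 d1 k1); lia|lia]. intros u [Hu _]. exact Hu.
  - intros u [_ Hl] Hu0. pose proof (levels_nonneg (prim u)) as [N1 N2].
    destruct Hl as [Hl|Hl].
    + destruct (level_bound_step (prim u) K1 0 h2 k2 1) as [X [H [HX [-> HH]]]]; try lia.
      * left. split; [lia|]. symmetry. apply window_points_small. lia.
      * apply card_det_fiber; assumption.
    + destruct (level_bound_step (prim u) 0 K2 h2 k2 1) as [X [H [HX [-> HH]]]]; try lia.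
      * right. split; [lia|]. symmetry. apply window_points_small. lia.
      * apply card_det_fiber; assumption.
Qed.

Definition capped_levels (K1 K2 : Z) (w : Z2) : Z2 :=
  (Z.min (fst (levels w)) K1, Z.min (snd (levels w)) K2).

Lemma capped_levels_eq (K1 K2 y1 y2 : Z) (w : Z2) : capped_levels K1 K2 w = (y1, y2) ->
  Z.min (fst (levels w)) K1 = y1 /\ Z.min (snd (levels w)) K2 = y2.
Proof.
  intro Hy. split; [apply (f_equal fst) in Hy | apply (f_equal snd) in Hy]; exact Hy.
Qed.

Lemma card_det_pairs (K1 K2 M : Z) : 1 <= K1 -> 1 <= K2 ->
  h2 <= 2 ^ (K1 - 1) -> k2 <= 2 ^ (K2 - 1) -> h1 * k1 <= M ->
  (forall l1 l2, 0 <= l1 < K1 -> 0 <= l2 < K2 -> 1 <= l1 \/ 1 <= l2 ->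
     exists G F, level_bound l1 l2 h1 k1 G /\ level_bound l1 l2 h2 k2 F /\
       Z.min (h1 * k1) (levels_card l1 l2 * G) * F <= M) ->
  card_leZ det_pairs ((K1 + 1) * (K2 + 1) * M).
Proof.
  intros HK1 HK2 HKh HKk HM Hclass.
  apply card_leZ_fibers with (f := fun p => capped_levels K1 K2 (prim (fst p))); [nia| |].
  - eapply card_leZ_mono; [|apply (card_leZ_box 0 (K1 + 1) 0 (K2 + 1)); lia|lia].
    intros y [p [_ <-]]. pose proof (levels_nonneg (prim (fst p))).
    unfold in_box, in_window, capped_levels; cbn [fst snd]. lia.
  - intros [y1 y2].
    destruct (classic (exists p, det_pairs p /\ capped_levels K1 K2 (prim (fst p)) = (y1, y2)))
      as [[p0 [[[_ Hu0] _] Hy]]|Hnone].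
    2: { apply card_leZ_empty; [nia|]. intros p Hp. apply Hnone. eauto. }
    apply capped_levels_eq in Hy as [E1 E2].
    pose proof (levels_nonneg (prim (fst p0))).
    pose proof (levels_neq0 _ (prim_neq0 _ Hu0)).
    destruct (Z_lt_le_dec y1 K1) as [L1|L1]; [destruct (Z_lt_le_dec y2 K2) as [L2|L2]|].
    + destruct (Hclass y1 y2) as [G [F [HG [HF HGF]]]]; try lia.
      eapply card_leZ_mono; [|apply (card_level_class y1 y2 G F); auto; lia|exact HGF].
      intros p [Hp Hc]. split; [exact Hp|]. apply capped_levels_eq in Hc as [C1 C2].
      destruct (levels (prim (fst p))) as [a b]. cbn [fst snd] in *. f_equal; lia.
    + eapply card_leZ_mono; [|apply (card_top_levels K1 K2); auto|exact HM].
      intros p [Hp Hc]. split; [exact Hp|]. apply capped_levels_eq in Hc. lia.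
    + eapply card_leZ_mono; [|apply (card_top_levels K1 K2); auto|exact HM].
      intros p [Hp Hc]. split; [exact Hp|]. apply capped_levels_eq in Hc. lia.
Qed.

End DetPairs.

Lemma window_points_mul_le (h X : Z) : 1 <= X <= h -> X * window_points h X <= 3 * h.
Proof.
  intro HX. unfold window_points. pose proof (Z.mul_div_le (h - 1) X ltac:(lia)). lia.
Qed.

Lemma pow2_pred (l : Z) : 1 <= l -> 2 ^ l = 2 * 2 ^ (l - 1).
Proof. intro Hl. rewrite <- Z.pow_succ_r by lia. f_equal. lia. Qed.

Lemma levels_card_le (l1 l2 : Z) : 0 <= l1 -> 0 <= l2 ->
  0 <= levels_card l1 l2 <= 4 * 2 ^ l1 * 2 ^ l2.
Proof.
  intros H1 H2. pose proof (pow2_ge1 l1 H1). pose proof (pow2_ge1 l2 H2).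
  unfold levels_card. nia.
Qed.

Lemma product_le (W G F X c a b : Z) : 0 <= X -> 0 <= G -> 0 <= F -> 0 <= c ->
  W <= c * X * X -> X * G <= a -> X * F <= b -> W * G * F <= c * a * b.
Proof.
  intros HX HG HF Hc HW Ha Hb.
  assert (H1 : W * (G * F) <= c * X * X * (G * F)) by (apply Z.mul_le_mono_nonneg_r; nia).
  assert (H2 : X * G * (X * F) <= a * b) by (apply Z.mul_le_mono_nonneg; nia).
  assert (H3 : c * (X * G * (X * F)) <= c * (a * b)) by (apply Z.mul_le_mono_nonneg_l; lia).
  nia.
Qed.

Lemma square_level_bound (A B l1 l2 : Z) : 1 <= A <= B -> 0 <= l1 -> 0 <= l2 ->
  1 <= l1 \/ 1 <= l2 ->
  exists G F, level_bound l1 l2 A A G /\ level_bound l1 l2 B B F /\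
    Z.min (A * A) (levels_card l1 l2 * G) * F <= 144 * A * B.
Proof.
  intros HAB H1 H2 H12. set (X := 2 ^ (Z.max l1 l2 - 1)).
  assert (HX : 1 <= X) by (apply pow2_ge1; lia).
  assert (Hbound : forall h, level_bound l1 l2 h h (window_points h X)).
  { intro h. destruct (Z.max_spec l1 l2) as [[_ E]|[_ E]]; unfold X; rewrite E; [right|left]; lia. }
  assert (HW : levels_card l1 l2 <= 16 * X * X).
  { pose proof (levels_card_le l1 l2 H1 H2).
    assert (2 ^ Z.max l1 l2 = 2 * X) by (apply pow2_pred; lia).
    pose proof (pow2_le l1 (Z.max l1 l2) ltac:(lia)).
    pose proof (pow2_le l2 (Z.max l1 l2) ltac:(lia)). nia. }
  pose proof (levels_card_le l1 l2 H1 H2).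
  exists (window_points A X), (window_points B X). split; [apply Hbound|]. split; [apply Hbound|].
  pose proof (window_points_ge1 A X ltac:(lia) HX).
  pose proof (window_points_ge1 B X ltac:(lia) HX).
  destruct (Z_le_gt_dec X A) as [XA|XA].
  - pose proof (window_points_mul_le A X ltac:(lia)).
    pose proof (window_points_mul_le B X ltac:(lia)).
    pose proof (product_le _ (window_points A X) (window_points B X) X 16 (3 * A) (3 * B)
      ltac:(lia) ltac:(lia) ltac:(lia) ltac:(lia) HW ltac:(lia) ltac:(lia)).
    pose proof (Z.le_min_r (A * A) (levels_card l1 l2 * window_points A X)). nia.
  - pose proof (Z.le_min_l (A * A) (levels_card l1 l2 * window_points A X)).
    destruct (Z_le_gt_dec X B) as [XB|XB].
    + pose proof (window_points_mul_le B X ltac:(lia)).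
      set (F := window_points B X) in *.
      assert (Z.min (A * A) (levels_card l1 l2 * window_points A X) * F <= A * A * F)
        by (apply Z.mul_le_mono_nonneg_r; lia).
      assert (A * A * F <= A * (X * F)) by nia.
      assert (A * (X * F) <= A * (3 * B)) by (apply Z.mul_le_mono_nonneg_l; lia).
      lia.
    + rewrite (window_points_small B X) by lia. nia.
Qed.

Lemma min_mul_one_le (P S W : Z) : 1 <= S <= P -> Z.min (P * S) W * 1 <= 144 * P * S.
Proof. intro HPS. pose proof (Z.le_min_l (P * S) W). nia. Qed.

Lemma rect_level_bound_first (P S l1 l2 : Z) : 1 <= S <= P -> 0 <= l2 <= l1 -> 1 <= l1 ->
  exists G F, level_bound l1 l2 P S G /\ level_bound l1 l2 S P F /\
    Z.min (P * S) (levels_card l1 l2 * G) * F <= 144 * P * S.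
Proof.
  intros HPS L L1. set (X := 2 ^ (l1 - 1)). assert (HX : 1 <= X) by (apply pow2_ge1; lia).
  exists (window_points P X), (window_points S X).
  split; [left; split; [lia|reflexivity]|]. split; [left; split; [lia|reflexivity]|].
  destruct (Z_le_gt_dec X S) as [XS|XS];
    [|rewrite (window_points_small S X) by lia; apply min_mul_one_le; lia].
  assert (HW : levels_card l1 l2 <= 16 * X * X).
  { pose proof (levels_card_le l1 l2 ltac:(lia) ltac:(lia)).
    assert (2 ^ l1 = 2 * X) by (apply pow2_pred; lia).
    pose proof (pow2_le l2 l1 ltac:(lia)). nia. }
  pose proof (window_points_ge1 P X ltac:(lia) HX).
  pose proof (window_points_ge1 S X ltac:(lia) HX).
  pose proof (window_points_mul_le P X ltac:(lia)).
  pose proof (window_points_mul_le S X ltac:(lia)).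
  pose proof (product_le _ (window_points P X) (window_points S X) X 16 (3 * P) (3 * S)
    ltac:(lia) ltac:(lia) ltac:(lia) ltac:(lia) HW ltac:(lia) ltac:(lia)).
  pose proof (Z.le_min_r (P * S) (levels_card l1 l2 * window_points P X)). nia.
Qed.

Lemma rect_level_bound_second (P S l1 l2 : Z) : 1 <= S <= P -> 0 <= l1 < l2 ->
  exists G F, level_bound l1 l2 P S G /\ level_bound l1 l2 S P F /\
    Z.min (P * S) (levels_card l1 l2 * G) * F <= 144 * P * S.
Proof.
  intros HPS L. set (Y := 2 ^ (l2 - 1)). assert (HY : 1 <= Y) by (apply pow2_ge1; lia).
  assert (HZ : 2 ^ l1 <= Y) by (apply pow2_le; lia).
  assert (HW : 0 <= levels_card l1 l2 <= 8 * 2 ^ l1 * Y).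
  { pose proof (levels_card_le l1 l2 ltac:(lia) ltac:(lia)).
    assert (2 ^ l2 = 2 * Y) by (apply pow2_pred; lia). nia. }
  pose proof (window_points_ge1 P Y ltac:(lia) HY).
  destruct (Z_le_gt_dec Y S) as [YS|YS].
  - exists (window_points S Y), (window_points P Y).
    split; [right; split; [lia|reflexivity]|]. split; [right; split; [lia|reflexivity]|].
    pose proof (window_points_ge1 S Y ltac:(lia) HY).
    pose proof (window_points_mul_le P Y ltac:(lia)).
    pose proof (window_points_mul_le S Y ltac:(lia)).
    pose proof (product_le (levels_card l1 l2) (window_points S Y) (window_points P Y) Y 8
      (3 * S) (3 * P) ltac:(lia) ltac:(lia) ltac:(lia) ltac:(lia) ltac:(nia) ltac:(lia) ltac:(lia)).
    pose proof (Z.le_min_r (P * S) (levels_card l1 l2 * window_points S Y)). nia.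
  - destruct (classic (1 <= l1 /\ S <= 2 ^ (l1 - 1))) as [[L1 SX]|NSX].
    + exists (window_points S Y), (window_points S (2 ^ (l1 - 1))).
      split; [right; split; [lia|reflexivity]|]. split; [left; split; [lia|reflexivity]|].
      rewrite (window_points_small S (2 ^ (l1 - 1))) by lia. apply min_mul_one_le; lia.
    + exists (window_points S Y), (window_points P Y).
      split; [right; split; [lia|reflexivity]|]. split; [right; split; [lia|reflexivity]|].
      destruct (Z_le_gt_dec Y P) as [YP|YP];
        [|rewrite (window_points_small P Y) by lia; apply min_mul_one_le; lia].
      assert (HZS : 2 ^ l1 <= 2 * S).
      { destruct (Z_le_gt_dec 1 l1) as [L1|L1].
        - rewrite pow2_pred by lia. lia.
        - replace l1 with 0 by lia. rewrite Z.pow_0_r. lia. }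
      pose proof (window_points_mul_le P Y ltac:(lia)).
      rewrite (window_points_small S Y) by lia.
      pose proof (Z.le_min_r (P * S) (levels_card l1 l2 * 1)).
      assert (levels_card l1 l2 * window_points P Y <= 8 * 2 ^ l1 * (Y * window_points P Y))
        by nia.
      nia.
Qed.

Lemma rect_level_bound (P S l1 l2 : Z) : 1 <= S <= P -> 0 <= l1 -> 0 <= l2 ->
  1 <= l1 \/ 1 <= l2 ->
  exists G F, level_bound l1 l2 P S G /\ level_bound l1 l2 S P F /\
    Z.min (P * S) (levels_card l1 l2 * G) * F <= 144 * P * S.
Proof.
  intros HPS H1 H2 H12. destruct (Z_le_gt_dec l2 l1).
  - apply rect_level_bound_first; lia.
  - apply rect_level_bound_second; lia.
Qed.

Lemma card_det_pairs_square (c1 d1 c2 d2 m a b : Z) : 0 <= a <= b ->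
  card_leZ (det_pairs c1 (2 ^ a) d1 (2 ^ a) c2 (2 ^ b) d2 (2 ^ b) m)
    (144 * (b + 2) * (b + 2) * 2 ^ a * 2 ^ b).
Proof.
  intro Hab. pose proof (pow2_ge1 a ltac:(lia)). pose proof (pow2_le a b ltac:(lia)).
  eapply card_leZ_mono; [intros p Hp; exact Hp| |].
  - apply (card_det_pairs c1 (2 ^ a) d1 (2 ^ a) c2 (2 ^ b) d2 (2 ^ b) m
      ltac:(lia) ltac:(lia) ltac:(lia) ltac:(lia) (b + 1) (b + 1) (144 * 2 ^ a * 2 ^ b));
      try (replace (b + 1 - 1) with b by lia); try lia.
    + nia.
    + intros l1 l2 H1 H2 H12. apply square_level_bound; lia.
  - nia.
Qed.

Lemma card_det_pairs_rect (c1 d1 c2 d2 m a b : Z) : 0 <= b <= a ->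
  card_leZ (det_pairs c1 (2 ^ a) d1 (2 ^ b) c2 (2 ^ b) d2 (2 ^ a) m)
    (144 * (b + 2) * (a + 2) * 2 ^ a * 2 ^ b).
Proof.
  intro Hab. pose proof (pow2_ge1 b ltac:(lia)). pose proof (pow2_le b a ltac:(lia)).
  eapply card_leZ_mono; [intros p Hp; exact Hp| |].
  - pose proof (pow2_ge1 a ltac:(lia)).
    apply (card_det_pairs c1 (2 ^ a) d1 (2 ^ b) c2 (2 ^ b) d2 (2 ^ a) m
      ltac:(lia) ltac:(lia) ltac:(lia) ltac:(lia) (b + 1) (a + 1) (144 * 2 ^ a * 2 ^ b));
      try (replace (b + 1 - 1) with b by lia);
      try (replace (a + 1 - 1) with a by lia); try lia.
    intros l1 l2 L1 L2 L12. apply rect_level_bound; lia.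
  - nia.
Qed.

(** * The resonant sets *)

Lemma Gamma_minus_spec (mu : Z) (n : Z2) (t : triple) : Gamma_minus mu n t ->
  t2 t = add2 (sub2 (t1 t) n) (t3 t) /\ t1 t <> n /\ t3 t <> n /\
  mu = 2 * det (sub2 (t1 t) n) (swap (sub2 (t3 t) n)).
Proof.
  destruct t as [[n1 n2] n3]. unfold Gamma_minus, Gamma, t1, t2, t3. cbn [fst snd].
  intros [[He [H1 H3]] Hmu]. split; [|split; [auto|split; [auto|]]].
  - rewrite <- He. destruct n1, n2, n3. unfold add2, sub2. cbn [fst snd]. f_equal; ring.
  - rewrite <- Hmu, <- He. destruct n1 as [a1 b1], n2 as [a2 b2], n3 as [a3 b3].
    unfold add2, sub2, hypmod2, det, swap. cbn [fst snd]. ring.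
Qed.

Lemma Gamma_minus_flip (mu : Z) (n n1 n2 n3 : Z2) :
  Gamma_minus mu n (n1, n2, n3) -> Gamma_minus mu n (n3, n2, n1).
Proof.
  unfold Gamma_minus, Gamma. intros [[He [H1 H3]] Hmu].
  split; [split; [|split; assumption]|].
  - rewrite <- He. unfold add2, sub2. cbn [fst snd]. f_equal; ring.
  - rewrite <- Hmu. ring.
Qed.

Lemma Gamma_minus_eq (mu : Z) (n : Z2) (t t' : triple) :
  Gamma_minus mu n t -> Gamma_minus mu n t' -> t1 t = t1 t' -> t3 t = t3 t' -> t = t'.
Proof.
  intros Ht Ht' E1 E3. destruct (Gamma_minus_spec _ _ _ Ht) as [E2 _].
  destruct (Gamma_minus_spec _ _ _ Ht') as [E2' _]. rewrite E1, E3, <- E2' in E2.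
  destruct t as [[n1 n2] n3], t' as [[n1' n2'] n3']. unfold t1, t2, t3 in *. cbn in *.
  congruence.
Qed.

Lemma sub2_inj (x y n : Z2) : sub2 x n = sub2 y n -> x = y.
Proof.
  destruct x, y. unfold sub2. cbn [fst snd]. intro E. injection E as E1 E2. f_equal; lia.
Qed.

Lemma swap_inj (x y : Z2) : swap x = swap y -> x = y.
Proof. destruct x, y. unfold swap. cbn [fst snd]. intro E. injection E as E1 E2. congruence. Qed.

Lemma abs_lt_of_sq (a R : Z) : 0 <= R -> a * a < R * R -> Z.abs a < R.
Proof.
  intros HR H. destruct (Z_lt_le_dec (Z.abs a) R) as [|HaR]; [assumption|].
  pose proof (Z.mul_le_mono_nonneg _ _ _ _ HR HaR HR HaR). rewrite Z.abs_square in *. lia.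
Qed.

Lemma dsim_abs_lt (x : Z2) (e : Z) : 0 <= e -> dsim x (2 ^ e) ->
  Z.abs (fst x) < 2 ^ (e + 1) /\ Z.abs (snd x) < 2 ^ (e + 1).
Proof.
  intros He H. pose proof (pow2_ge1 e He).
  rewrite Z.pow_add_r, Z.pow_1_r by lia.
  assert (Hn : eucl2 x < (2 ^ e * 2) * (2 ^ e * 2)).
  { unfold dsim in H. destruct (Z.eqb_spec (2 ^ e) 1) as [E|]; [rewrite E; lia|nia]. }
  unfold eucl2 in Hn. destruct x as [a b]; cbn [fst snd] in *.
  split; apply abs_lt_of_sq; nia.
Qed.

Lemma card_Gamma13_ordered (mu : Z) (n : Z2) (e1 e3 : Z) : 0 <= e1 <= e3 ->
  card_leZ (fun t => Gamma_minus mu n t /\ dsim (t1 t) (2 ^ e1) /\ dsim (t3 t) (2 ^ e3))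
    (144 * (e3 + 4) * (e3 + 4) * 2 ^ (e1 + 2) * 2 ^ (e3 + 2)).
Proof.
  intro He. set (R1 := 2 ^ (e1 + 1)). set (R3 := 2 ^ (e3 + 1)).
  apply (card_leZ_inj _
    (det_pairs (- fst n - R1) (2 ^ (e1 + 2)) (- snd n - R1) (2 ^ (e1 + 2))
               (- snd n - R3) (2 ^ (e3 + 2)) (- fst n - R3) (2 ^ (e3 + 2)) (mu / 2))
    (fun t => (sub2 (t1 t) n, swap (sub2 (t3 t) n)))).
  - intros t t' [Ht _] [Ht' _] E.
    pose proof (f_equal fst E) as E1. pose proof (f_equal snd E) as E3. cbn [fst snd] in E1, E3.
    apply (Gamma_minus_eq mu n); auto; [apply (sub2_inj _ _ n) | apply (sub2_inj _ _ n), swap_inj];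
      assumption.
  - intros t [Ht [D1 D3]]. destruct (Gamma_minus_spec _ _ _ Ht) as [_ [N1 [_ Hmu]]].
    apply dsim_abs_lt in D1, D3; try lia.
    replace (e1 + 2) with (Z.succ (e1 + 1)) by lia.
    replace (e3 + 2) with (Z.succ (e3 + 1)) by lia.
    rewrite !Z.pow_succ_r by lia. fold R1 R3.
    unfold det_pairs, in_box, in_window, sub2, swap in *. cbn [fst snd] in *.
    split; [split; [lia|]|split; [lia|]].
    + intro E. injection E as E1 E2. apply N1. destruct (t1 t), n; cbn in *; f_equal; lia.
    + rewrite Hmu, Z.mul_comm, Z.div_mul by lia. reflexivity.
  - replace (e3 + 4) with (e3 + 2 + 2) by lia. apply card_det_pairs_square. lia.
Qed.

Lemma card_Gamma13 (mu : Z) (n : Z2) (e1 e3 : Z) : 0 <= e1 -> 0 <= e3 ->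
  card_leZ (fun t => Gamma_minus mu n t /\ dsim (t1 t) (2 ^ e1) /\ dsim (t3 t) (2 ^ e3))
    (65536 * (Z.max e1 e3 + 7) * (Z.max e1 e3 + 7) * 2 ^ e1 * 2 ^ e3).
Proof.
  intros H1 H3. pose proof (pow2_ge1 e1 H1). pose proof (pow2_ge1 e3 H3).
  destruct (Z_le_gt_dec e1 e3) as [L|L].
  - eapply card_leZ_mono; [intros t Ht; exact Ht|apply card_Gamma13_ordered; lia|].
    rewrite !Z.pow_add_r, Z.max_r by lia. nia.
  - apply (card_leZ_inj _
      (fun t => Gamma_minus mu n t /\ dsim (t1 t) (2 ^ e3) /\ dsim (t3 t) (2 ^ e1))
      (fun t => (t3 t, t2 t, t1 t))).
    + intros [[a b] c] [[a' b'] c'] _ _ E. unfold t1, t2, t3 in E. cbn in E.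
      injection E as Ec Eb Ea. congruence.
    + intros [[a b] c] [Ht [D1 D3]]. unfold t1, t2, t3 in *. cbn in *.
      split; [apply Gamma_minus_flip, Ht|split; assumption].
    + eapply card_leZ_mono; [intros t Ht; exact Ht|apply card_Gamma13_ordered; lia|].
      rewrite !Z.pow_add_r, Z.max_l by lia. nia.
Qed.

(* Bounding [n3 - n = n2 - n1] by the larger size [|n2|] reduces this case to the first count. *)
Lemma card_Gamma12_ordered (mu : Z) (n : Z2) (e1 e2 : Z) : 0 <= e1 <= e2 ->
  card_leZ (fun t => Gamma_minus mu n t /\ dsim (t1 t) (2 ^ e1) /\ dsim (t2 t) (2 ^ e2))
    (144 * (e2 + 5) * (e2 + 5) * 2 ^ (e1 + 2) * 2 ^ (e2 + 3)).
Proof.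
  intro He. set (R1 := 2 ^ (e1 + 1)). set (R2 := 2 ^ (e2 + 2)).
  apply (card_leZ_inj _
    (det_pairs (- fst n - R1) (2 ^ (e1 + 2)) (- snd n - R1) (2 ^ (e1 + 2))
               (- R2) (2 ^ (e2 + 3)) (- R2) (2 ^ (e2 + 3)) (mu / 2))
    (fun t => (sub2 (t1 t) n, swap (sub2 (t3 t) n)))).
  - intros t t' [Ht _] [Ht' _] E.
    pose proof (f_equal fst E) as E1. pose proof (f_equal snd E) as E3. cbn [fst snd] in E1, E3.
    apply (Gamma_minus_eq mu n); auto; [apply (sub2_inj _ _ n) | apply (sub2_inj _ _ n), swap_inj];
      assumption.
  - intros t [Ht [D1 D2]]. destruct (Gamma_minus_spec _ _ _ Ht) as [E2 [N1 [_ Hmu]]].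
    apply dsim_abs_lt in D1, D2; try lia.
    assert (2 ^ (e2 + 1) + 2 ^ (e1 + 1) <= R2).
    { unfold R2. replace (e2 + 2) with (Z.succ (e2 + 1)) by lia.
      rewrite Z.pow_succ_r by lia. pose proof (pow2_le (e1 + 1) (e2 + 1) ltac:(lia)). lia. }
    replace (e1 + 2) with (Z.succ (e1 + 1)) by lia.
    replace (e2 + 3) with (Z.succ (e2 + 2)) by lia.
    rewrite !Z.pow_succ_r by lia. fold R1 R2.
    rewrite E2 in D2. destruct (t1 t) as [a1 b1], (t3 t) as [a3 b3], n as [a b].
    unfold det_pairs, in_box, in_window, add2, sub2, swap in *. cbn [fst snd] in *.
    split; [split; [lia|]|split; [lia|]].
    + intro E. injection E as Ea Eb. apply N1. f_equal; lia.
    + rewrite Hmu, Z.mul_comm, Z.div_mul by lia. reflexivity.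
  - replace (e2 + 5) with (e2 + 3 + 2) by lia. apply card_det_pairs_square. lia.
Qed.

(* In the coordinates [j + k] and [j - k] the hyperbolic quadratic form factorises; for
   [x = n1 - n] and [z = n2 - n] this pair of vectors has determinant [-2 mu]. *)
Definition light_cone_pair (x z : Z2) : Z2 * Z2 :=
  ((2 * (fst x + snd x) - (fst z + snd z), fst z - snd z),
   (fst z + snd z, 2 * (fst x - snd x) - (fst z - snd z))).

Lemma det_light_cone_pair (x z : Z2) :
  det (fst (light_cone_pair x z)) (snd (light_cone_pair x z)) = - 4 * det x (swap (sub2 z x)).
Proof. destruct x, z. unfold light_cone_pair, det, swap, sub2. cbn [fst snd]. ring. Qed.

Lemma light_cone_pair_inj (x z x' z' : Z2) :
  light_cone_pair x z = light_cone_pair x' z' -> x = x' /\ z = z'.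
Proof.
  intro E. pose proof (f_equal (fun p => fst (fst p)) E) as E1.
  pose proof (f_equal (fun p => snd (fst p)) E) as E2.
  pose proof (f_equal (fun p => fst (snd p)) E) as E3.
  pose proof (f_equal (fun p => snd (snd p)) E) as E4.
  destruct x, z, x', z'. unfold light_cone_pair in *. cbn [fst snd] in *. split; f_equal; lia.
Qed.

Lemma card_Gamma12_reversed (mu : Z) (n : Z2) (e1 e2 : Z) : 0 <= e2 < e1 ->
  card_leZ (fun t => Gamma_minus mu n t /\ dsim (t1 t) (2 ^ e1) /\ dsim (t2 t) (2 ^ e2))
    (144 * (e2 + 5) * (e1 + 7) * 2 ^ (e1 + 5) * 2 ^ (e2 + 3) + 2 ^ (e2 + 3) * 2 ^ (e1 + 5)).
Proof.
  intro He. set (P := 2 ^ (e1 + 5)). set (S := 2 ^ (e2 + 3)).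
  set (s := fst n + snd n). set (d := fst n - snd n).
  assert (HP : 2 * 2 ^ (e1 + 4) = P) by (unfold P; rewrite <- Z.pow_succ_r by lia; f_equal; lia).
  assert (HS : 2 * 2 ^ (e2 + 2) = S) by (unfold S; rewrite <- Z.pow_succ_r by lia; f_equal; lia).
  apply (card_leZ_inj _
    (fun p => det_pairs (- s - 2 ^ (e1 + 4)) P (- d - 2 ^ (e2 + 2)) S
                        (- s - 2 ^ (e2 + 2)) S (- d - 2 ^ (e1 + 4)) P (- 2 * mu) p \/
              (fst p = (0, 0) /\ in_box (- s - 2 ^ (e2 + 2)) S (- d - 2 ^ (e1 + 4)) P (snd p)))
    (fun t => light_cone_pair (sub2 (t1 t) n) (sub2 (t2 t) n))).
  - intros t t' [Ht _] [Ht' _] E. apply light_cone_pair_inj in E as [E1 E2].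
    apply sub2_inj in E1, E2. apply (Gamma_minus_eq mu n); auto.
    destruct (Gamma_minus_spec _ _ _ Ht) as [F2 _].
    destruct (Gamma_minus_spec _ _ _ Ht') as [F2' _].
    rewrite F2, F2', E1 in E2. destruct (t3 t), (t3 t'), (t1 t'), n.
    unfold add2, sub2 in E2. cbn [fst snd] in E2. injection E2 as Ea Eb. f_equal; lia.
  - intros t [Ht [D1 D2]]. destruct (Gamma_minus_spec _ _ _ Ht) as [E2 [_ [_ Hmu]]].
    apply dsim_abs_lt in D1, D2; try lia.
    assert (Hdet : det (fst (light_cone_pair (sub2 (t1 t) n) (sub2 (t2 t) n)))
                       (snd (light_cone_pair (sub2 (t1 t) n) (sub2 (t2 t) n))) = - 2 * mu).
    { rewrite det_light_cone_pair, Hmu, E2. destruct (t1 t), (t3 t), n.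
      unfold det, swap, add2, sub2. cbn [fst snd]. ring. }
    assert (2 ^ (e1 + 4) = 8 * 2 ^ (e1 + 1)) by (rewrite !Z.pow_add_r by lia; lia).
    assert (2 ^ (e2 + 2) = 2 * 2 ^ (e2 + 1)) by (rewrite !Z.pow_add_r by lia; lia).
    pose proof (pow2_le (e2 + 1) (e1 + 1) ltac:(lia)).
    destruct (classic (fst (light_cone_pair (sub2 (t1 t) n) (sub2 (t2 t) n)) = (0, 0))) as [Z0|Z0];
      [right; split; [exact Z0|] | left; split; [split; [|exact Z0]|split; [|exact Hdet]]];
      clear Hdet Z0; unfold s, d in *; destruct (t1 t), (t2 t), n;
      unfold light_cone_pair, in_box, in_window, sub2 in *; cbn [fst snd] in *; lia.
  - apply card_leZ_union.
    + replace (e2 + 5) with (e2 + 3 + 2) by lia. replace (e1 + 7) with (e1 + 5 + 2) by lia.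
      unfold P, S. apply card_det_pairs_rect. lia.
    + apply (card_leZ_inj _ (in_box (- s - 2 ^ (e2 + 2)) S (- d - 2 ^ (e1 + 4)) P) (@snd Z2 Z2)).
      * intros [x1 x2] [y1 y2] [E1 _] [E2 _] E. cbn [fst snd] in *. congruence.
      * intros p [_ Hp]. exact Hp.
      * pose proof (pow2_ge1 (e1 + 5)). pose proof (pow2_ge1 (e2 + 3)).
        apply card_leZ_box; unfold S, P; lia.
Qed.

Lemma card_Gamma12 (mu : Z) (n : Z2) (e1 e2 : Z) : 0 <= e1 -> 0 <= e2 ->
  card_leZ (fun t => Gamma_minus mu n t /\ dsim (t1 t) (2 ^ e1) /\ dsim (t2 t) (2 ^ e2))
    (65536 * (Z.max e1 e2 + 7) * (Z.max e1 e2 + 7) * 2 ^ e1 * 2 ^ e2).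
Proof.
  intros H1 H2. pose proof (pow2_ge1 e1 H1). pose proof (pow2_ge1 e2 H2).
  destruct (Z_le_gt_dec e1 e2) as [L|L].
  - eapply card_leZ_mono; [intros t Ht; exact Ht|apply card_Gamma12_ordered; lia|].
    rewrite !Z.pow_add_r, Z.max_r by lia. nia.
  - eapply card_leZ_mono; [intros t Ht; exact Ht|apply card_Gamma12_reversed; lia|].
    rewrite !Z.pow_add_r, Z.max_l by lia. nia.
Qed.

Lemma pow2_max (a b : Z) : Z.max (2 ^ a) (2 ^ b) = 2 ^ Z.max a b.
Proof.
  destruct (Z.max_spec a b) as [[L E]|[L E]]; rewrite E;
    [apply Z.max_r | apply Z.max_l]; apply pow2_le; lia.
Qed.

Section Reals.

Local Open Scope R_scope.

(* With [a = theta ln 2 / 2] and [c = 7 + 1 / a]: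
   [k + 7 <= c (1 + a k) <= c e^(a k)], and squaring gives [c^2 2^(theta k)]. *)
Lemma sq_le_Rpower (theta : R) : 0 < theta -> exists C0, 0 < C0 /\
  forall k : nat, (INR k + 7) ^ 2 <= C0 * Rpower (IZR (2 ^ Z.of_nat k)) theta.
Proof.
  intros Ht. set (a := theta * ln 2 / 2).
  assert (Hl2 : 0 < ln 2) by (rewrite <- ln_1; apply ln_increasing; lra).
  assert (Ha : 0 < a) by (unfold a; apply Rmult_lt_0_compat; [apply Rmult_lt_0_compat|]; lra).
  assert (Hia : 0 < / a) by (apply Rinv_0_lt_compat, Ha).
  set (c := 7 + / a). exists (c * c). split; [unfold c; nra|]. intro k.
  rewrite <- pow_IZR. unfold Rpower. rewrite ln_pow by lra.
  replace (theta * (INR k * ln 2)) with (a * INR k + a * INR k) by (unfold a; field).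
  rewrite exp_plus.
  assert (Hk : 0 <= INR k) by apply pos_INR.
  assert (Hexp : 1 + a * INR k <= exp (a * INR k)).
  { destruct (Req_dec (a * INR k) 0) as [E|E].
    - rewrite E, exp_0. lra.
    - left. apply exp_ineq1. nra. }
  assert (Hlin : INR k + 7 <= c * (1 + a * INR k)).
  { unfold c. assert (/ a * (a * INR k) = INR k) by (field; lra). nra. }
  assert (INR k + 7 <= c * exp (a * INR k)) by (unfold c in *; nra).
  simpl. nra.
Qed.

Lemma card_le_dyadic {T : Type} (S : T -> Prop) (C0 theta : R) (ka kb : nat) :
  (forall k : nat, (INR k + 7) ^ 2 <= C0 * Rpower (IZR (2 ^ Z.of_nat k)) theta) ->
  card_leZ S (65536 * (Z.max (Z.of_nat ka) (Z.of_nat kb) + 7) *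
                (Z.max (Z.of_nat ka) (Z.of_nat kb) + 7) * 2 ^ Z.of_nat ka * 2 ^ Z.of_nat kb) ->
  card_le S (65536 * C0 * IZR (2 ^ Z.of_nat ka) * IZR (2 ^ Z.of_nat kb) *
             Rpower (IZR (Z.max (2 ^ Z.of_nat ka) (2 ^ Z.of_nat kb))) theta).
Proof.
  intros HC H l Hl Hin. specialize (H l Hl Hin).
  rewrite pow2_max, <- Nat2Z.inj_max in *. specialize (HC (Nat.max ka kb)).
  rewrite INR_IZR_INZ. apply IZR_le in H. eapply Rle_trans; [exact H|].
  rewrite !mult_IZR, plus_IZR, <- INR_IZR_INZ.
  pose proof (IZR_le _ _ (pow2_ge1 (Z.of_nat ka) ltac:(lia))).
  pose proof (IZR_le _ _ (pow2_ge1 (Z.of_nat kb) ltac:(lia))).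
  set (x := IZR (2 ^ Z.of_nat ka)) in *. set (y := IZR (2 ^ Z.of_nat kb)) in *.
  set (r := Rpower _ theta) in *. simpl in HC.
  assert ((INR (Nat.max ka kb) + 7) * (INR (Nat.max ka kb) + 7) * (x * y) <= C0 * r * (x * y))
    by (apply Rmult_le_compat_r; nra).
  nra.
Qed.

End Reals.

Theorem lemma2p1 :
  forall theta : R, (0 < theta)%R ->
  exists C : R, (0 < C)%R /\
  forall (n : Z * Z) (mu : Z) (k1 k2 k3 : nat),
    let N1 := (2 ^ Z.of_nat k1)%Z in
    let N2 := (2 ^ Z.of_nat k2)%Z in
    let N3 := (2 ^ Z.of_nat k3)%Z in
    card_le (fun t => Gamma_minus mu n t /\ dsim (t1 t) N1 /\ dsim (t3 t) N3)
      (C * IZR N1 * IZR N3 * Rpower (IZR (Z.max N1 N3)) theta)%R /\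
    card_le (fun t => Gamma_minus mu n t /\ dsim (t1 t) N1 /\ dsim (t2 t) N2)
      (C * IZR N1 * IZR N2 * Rpower (IZR (Z.max N1 N2)) theta)%R.
Proof.
  intros theta Htheta. destruct (sq_le_Rpower theta Htheta) as [C0 [HC0 HC]].
  exists (65536 * C0)%R. split; [lra|]. intros n mu k1 k2 k3. cbv zeta. split.
  - apply card_le_dyadic; [exact HC|]. apply card_Gamma13; lia.
  - apply card_le_dyadic; [exact HC|]. apply card_Gamma12; lia.
Qed.
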